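(* Let $\mathcal{M}$ be a countable Scott set coded by $M = \bigoplus_i X_i$ and let $C \subseteq \omega^2$ be such that $\mathcal{U}^{\mathcal{M}}_C$ is an $\mathcal{M}$-cohesive largeness class. Then the class $$\langle \mathcal{U}^{\mathcal{M}}_C \rangle = \bigcap\{\mathcal{U}^X_e : e\in\omega,\ X\in\mathcal{M},\ \mathcal{U}^{\mathcal{M}}_C\cap\mathcal{U}^X_e \text{ is a largeness class}\}$$ is an $\mathcal{M}$-minimal largeness class contained in $\mathcal{U}^{\mathcal{M}}_C$.
   Context: A largeness class is a non-empty $\mathcal{A} \subseteq 2^\omega$ closed upward under $\subseteq$ such that for every finite cover $Y_0\cup\dots\cup Y_{k-1}=\omega$ some $Y_j \in \mathcal{A}$. A Scott set is a collection of sets closed under Turing reducibility and join such that every infinite binary tree in it has a path in it; it is countable coded by $M$ if it equals $\{X_i : i\in\omega\}$ with $M = \bigoplus_i X_i$. Fix an effective enumeration $\mathcal{U}^Z_0,\mathcal{U}^Z_1,\dots$ (uniform in the oracle $Z$) of all $\Sigma^0_1(Z)$ classes which are upward-closed under $\subseteq$. For $C\subseteq\omega^2$, $\mathcal{U}^{\mathcal{M}}_C = \bigcap_{\langle e,i\rangle\in C}\mathcal{U}^{X_i}_e$. For an infinite set $X$, $\mathcal{L}_X$ is the class of all sets having infinite intersection with $X$. A class $\mathcal{A}$ is $\mathcal{M}$-cohesive if for every $X \in \mathcal{M}$, either $\mathcal{A}\subseteq \mathcal{L}_X$ or $\mathcal{A}\subseteq\mathcal{L}_{\omega\setminus X}$.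 A class $\mathcal{A}$ is $\mathcal{M}$-minimal if for every $X\in\mathcal{M}$ and $e\in\omega$, either $\mathcal{A}\subseteq\mathcal{U}^X_e$ or $\mathcal{A}\cap\mathcal{U}^X_e$ is not a largeness class. *)

From Stdlib Require Import Arith List Bool Cantor.
Import ListNotations.

Definition set := nat -> bool.
Definition cls := set -> Prop.

Definition pair (x y : nat) : nat := Cantor.to_nat (x, y).
Definition unfst (n : nat) : nat := fst (Cantor.of_nat n).
Definition unsnd (n : nat) : nat := snd (Cantor.of_nat n).

Inductive code : Type :=
| cZero
| cSucc
| cId
| cFst
| cSnd
| cOracle
| cComp (f g : code)
| cPair (f g : code)
| cRec (f g : code)
| cMu (f : code).

Inductive eval (Z : set) : code -> nat -> nat -> Prop :=
| eZero x : eval Z cZero x 0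
| eSucc x : eval Z cSucc x (S x)
| eId x : eval Z cId x x
| eFst x : eval Z cFst x (unfst x)
| eSnd x : eval Z cSnd x (unsnd x)
| eOracle x : eval Z cOracle x (if Z x then 1 else 0)
| eComp f g x y z : eval Z g x y -> eval Z f y z -> eval Z (cComp f g) x z
| ePair f g x y z : eval Z f x y -> eval Z g x z -> eval Z (cPair f g) x (pair y z)
| eRec0 f g x y : eval Z f x y -> eval Z (cRec f g) (pair x 0) y
| eRecS f g x n y z :
    eval Z (cRec f g) (pair x n) y -> eval Z g (pair (pair x n) y) z ->
    eval Z (cRec f g) (pair x (S n)) z
| eMu f x y :
    eval Z f (pair x y) 0 ->
    (forall m, m < y -> exists v, v <> 0 /\ eval Z f (pair x m) v) ->
    eval Z (cMu f) x y.

(* Goedel numbering: a total, effective, surjective decoding nat -> code. *)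
Fixpoint dec (fuel n : nat) : code :=
  match fuel with
  | 0 => cZero
  | S k =>
    let q := n / 10 in
    let a := unfst q in
    let b := unsnd q in
    match n mod 10 with
    | 0 => cZero | 1 => cSucc | 2 => cId | 3 => cFst | 4 => cSnd | 5 => cOracle
    | 6 => cComp (dec k a) (dec k b)
    | 7 => cPair (dec k a) (dec k b)
    | 8 => cRec (dec k a) (dec k b)
    | _ => cMu (dec k q)
    end
  end.
Definition decode (e : nat) : code := dec (S e) e.

Definition W (Z : set) (e : nat) (k : nat) : Prop := exists v, eval Z (decode e) k v.

Definition turing_le (Y Z : set) : Prop :=
  exists c : code, forall n, eval Z c n (if Y n then 1 else 0).

Definition canon (k : nat) : set := fun n => Nat.testbit k n.

(* The fixed effective enumeration of upward-closed Sigma^0_1(Z) classes: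
   U^Z_e = { Y | exists finite F in W^Z_e with F subset Y }. *)
Definition U (Z : set) (e : nat) : cls :=
  fun Y => exists k, W Z e k /\ forall n, canon k n = true -> Y n = true.

Definition subset (X Y : set) : Prop := forall n, X n = true -> Y n = true.
Definition join (X Y : set) : set :=
  fun n => if Nat.even n then X (Nat.div2 n) else Y (Nat.div2 n).

(* bijective coding of binary strings (list head = first bit) *)
Fixpoint strcode (s : list bool) : nat :=
  match s with
  | [] => 0
  | b :: s' => 2 * strcode s' + (if b then 2 else 1)
  end.

Definition prefix_of (P : set) (n : nat) : list bool := map P (seq 0 n).

Definition in_tree (T : set) (s : list bool) : Prop := T (strcode s) = true.
Definition is_tree (T : set) : Prop :=
  forall s t, in_tree T (s ++ t) -> in_tree T s.
Definition infinite (X : set) : Prop := forall n, exists m, n <= m /\ X m = true.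
Definition is_path (P T : set) : Prop := forall n, in_tree T (prefix_of P n).

Definition col (M : set) (i : nat) : set := fun n => M (pair i n).
Definition inM (M : set) (X : set) : Prop := exists i, forall n, col M i n = X n.

Definition scott_coded (M : set) : Prop :=
  (forall Y Z, inM M Z -> turing_le Y Z -> inM M Y) /\
  (forall X Y, inM M X -> inM M Y -> inM M (join X Y)) /\
  (forall T, inM M T -> is_tree T -> infinite T -> exists P, inM M P /\ is_path P T).

Definition cls_inter (A B : cls) : cls := fun Y => A Y /\ B Y.
Definition cls_sub (A B : cls) : Prop := forall Y, A Y -> B Y.

Definition largeness (A : cls) : Prop :=
  (exists Y, A Y) /\
  (forall X Y, A X -> subset X Y -> A Y) /\
  (forall (k : nat) (Ys : nat -> set),
      (forall n, exists j, j < k /\ Ys j n = true) ->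
      exists j, j < k /\ A (Ys j)).

Definition UC (M : set) (C : nat -> nat -> Prop) : cls :=
  fun Y => forall e i, C e i -> U (col M i) e Y.

Definition L (X : set) : cls := fun Y => infinite (fun n => X n && Y n).
Definition compl (X : set) : set := fun n => negb (X n).

Definition M_cohesive (M : set) (A : cls) : Prop :=
  forall X, inM M X -> cls_sub A (L X) \/ cls_sub A (L (compl X)).

Definition M_minimal (M : set) (A : cls) : Prop :=
  forall X e, inM M X -> cls_sub A (U X e) \/ ~ largeness (cls_inter A (U X e)).

Definition gen (M : set) (C : nat -> nat -> Prop) : cls :=
  fun Y => forall e X, inM M X -> largeness (cls_inter (UC M C) (U X e)) -> U X e Y.

(* Containment and minimality follow directly from the definition of <U^M_C>.
   The substance is partition regularity.  Suppose Y_0 u ... u Y_{k-1} = omega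
   and no Y_j lies in <U^M_C>: then each Y_j avoids some U^{X_j}_{e_j} with
   X_j in M and U^M_C n U^{X_j}_{e_j} large.  The covers (Z_0,...,Z_{k-1})
   with Z_j outside U^{X_j}_{e_j} form a nonempty Pi^0_1(X_0 + ... + X_{k-1})
   class, so by the Scott-set (basis) property there is such a cover in M.
   Some Z_j of it lies in U^M_C; M-cohesiveness of U^M_C then forces every
   large subclass U^M_C n U of that kind to contain Z_j, contradicting
   Z_j outside U^{X_j}_{e_j}. *)
From Stdlib Require Import Arith List Bool Cantor Lia Classical.

Lemma unfst_pair x y : unfst (pair x y) = x.
Proof. unfold unfst, pair. rewrite Cantor.cancel_of_to. reflexivity. Qed.

Lemma unsnd_pair x y : unsnd (pair x y) = y.
Proof. unfold unsnd, pair. rewrite Cantor.cancel_of_to. reflexivity. Qed.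

Lemma pair_unpair m : pair (unfst m) (unsnd m) = m.
Proof.
  unfold unfst, unsnd, pair. rewrite <- surjective_pairing.
  apply Cantor.cancel_to_of.
Qed.

Lemma pair_inj x y x' y' : pair x y = pair x' y' -> x = x' /\ y = y'.
Proof.
  intro H. split.
  - rewrite <- (unfst_pair x y), H. apply unfst_pair.
  - rewrite <- (unsnd_pair x y), H. apply unsnd_pair.
Qed.

(** * Functions computable relative to an oracle *)

Definition computable (Z : set) (f : nat -> nat) : Prop :=
  exists c, forall x, eval Z c x (f x).

Definition computable2 Z (g : nat -> nat -> nat) : Prop :=
  computable Z (fun w => g (unfst w) (unsnd w)).
Definition computable3 Z (g : nat -> nat -> nat -> nat) : Prop :=
  computable Z (fun w => g (unfst (unfst w)) (unsnd (unfst w)) (unsnd w)).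

Lemma computable_ext Z f g :
  (forall x, f x = g x) -> computable Z f -> computable Z g.
Proof. intros H [c Hc]. exists c. intro x. rewrite <- H. apply Hc. Qed.

Lemma computable_id Z : computable Z (fun x => x).
Proof. exists cId. intro; constructor. Qed.

Lemma computable_comp Z f g :
  computable Z f -> computable Z g -> computable Z (fun x => f (g x)).
Proof. intros [cf Hf] [cg Hg]. exists (cComp cf cg). intro x. econstructor; eauto. Qed.

Lemma computable_S Z g : computable Z g -> computable Z (fun x => S (g x)).
Proof. intro H. apply (computable_comp Z S g); auto. exists cSucc. intro; constructor. Qed.

Lemma computable_unfst Z g : computable Z g -> computable Z (fun x => unfst (g x)).
Proof. intro H. apply (computable_comp Z unfst g); auto. exists cFst. intro; constructor. Qed.

Lemma computable_unsnd Z g : computable Z g -> computable Z (fun x => unsnd (g x)).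
Proof. intro H. apply (computable_comp Z unsnd g); auto. exists cSnd. intro; constructor. Qed.

Lemma computable_pair Z f g :
  computable Z f -> computable Z g -> computable Z (fun x => pair (f x) (g x)).
Proof. intros [cf Hf] [cg Hg]. exists (cPair cf cg). intro x. econstructor; eauto. Qed.

(* Querying the oracle at a computable position; [Nat.b2n (Z y)] unfolds to
   [if Z y then 1 else 0], so this covers both spellings. *)
Lemma computable_oracle Z a :
  computable Z a -> computable Z (fun x => if Z (a x) then 1 else 0).
Proof.
  intro H. apply (computable_comp Z (fun x => if Z x then 1 else 0) a); auto.
  exists cOracle. intro; constructor.
Qed.

Lemma computable_const Z n : computable Z (fun _ => n).
Proof.
  induction n.
  - exists cZero. intro; constructor.
  - apply (computable_S Z (fun _ => n)); auto.
Qed.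

Fixpoint primrec (f : nat -> nat) (g : nat -> nat -> nat -> nat) (x n : nat) : nat :=
  match n with 0 => f x | S n => g x n (primrec f g x n) end.

Lemma primrec_ext f g g' x n :
  (forall a b c, g a b c = g' a b c) -> primrec f g x n = primrec f g' x n.
Proof. intro H. induction n; simpl; congruence. Qed.

Lemma computable_primrec2 Z f g :
  computable Z f -> computable3 Z g -> computable2 Z (primrec f g).
Proof.
  intros [cf Hf] [cg Hg]. exists (cRec cf cg). intro w.
  rewrite <- (pair_unpair w) at 1. generalize (unfst w) (unsnd w). intros x n.
  induction n; simpl.
  - constructor. auto.
  - econstructor; [eauto|].
    specialize (Hg (pair (pair x n) (primrec f g x n))).
    rewrite !unfst_pair, !unsnd_pair in Hg. exact Hg.
Qed.

Lemma computable2_app Z g a b :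
  computable2 Z g -> computable Z a -> computable Z b ->
  computable Z (fun x => g (a x) (b x)).
Proof.
  intros H Ha Hb. eapply computable_ext;
    [| apply (computable_comp Z _ (fun x => pair (a x) (b x)) H); apply computable_pair; auto].
  intro x. simpl. rewrite unfst_pair, unsnd_pair. reflexivity.
Qed.

Lemma computable3_app Z g a b c :
  computable3 Z g -> computable Z a -> computable Z b -> computable Z c ->
  computable Z (fun x => g (a x) (b x) (c x)).
Proof.
  intros H Ha Hb Hc. eapply computable_ext;
    [| apply (computable_comp Z _ (fun x => pair (pair (a x) (b x)) (c x)) H);
       apply computable_pair; [apply computable_pair|]; auto].
  intro x. simpl. rewrite !unfst_pair, !unsnd_pair. reflexivity.
Qed.

Lemma computable_primrec Z f g a b :
  computable Z f -> computable3 Z g -> computable Z a -> computable Z b ->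
  computable Z (fun x => primrec f g (a x) (b x)).
Proof. intros. apply computable2_app; auto. apply computable_primrec2; auto. Qed.

Create HintDb computable_db.

Ltac comp_basic_step :=
  match goal with
  | |- computable2 _ _ => unfold computable2
  | |- computable3 _ _ => unfold computable3
  | |- computable _ (fun x => x) => apply computable_id
  | |- computable _ unfst => apply (computable_unfst _ (fun x => x)); apply computable_id
  | |- computable _ unsnd => apply (computable_unsnd _ (fun x => x)); apply computable_id
  | |- computable _ (fun _ => ?c) => apply computable_const
  | |- computable _ (fun x => S (@?a x)) => apply (computable_S _ a)
  | |- computable _ (fun x => unfst (@?a x)) => apply (computable_unfst _ a)
  | |- computable _ (fun x => unsnd (@?a x)) => apply (computable_unsnd _ a)
  | |- computable _ (fun x => pair (@?a x) (@?b x)) => apply (computable_pair _ a b)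
  | |- computable ?Z (fun x => if ?Z (@?a x) then 1 else 0) => apply (computable_oracle _ a)
  | |- computable ?Z (fun x => Nat.b2n (?Z (@?a x))) => apply (computable_oracle _ a)
  | |- computable _ (fun x => primrec ?f ?g (@?a x) (@?b x)) =>
        apply (computable_primrec _ f g a b)
  | |- computable _ (fun x => ?g (@?a x) (@?b x) (@?c x)) =>
        apply (computable3_app _ g a b c);
        [first [assumption | solve [eauto with computable_db]] | | |]
  | |- computable _ (fun x => ?g (@?a x) (@?b x)) =>
        apply (computable2_app _ g a b);
        [first [assumption | solve [eauto with computable_db]] | |]
  | |- computable _ (fun x => ?g (@?a x)) =>
        apply (computable_comp _ g a);
        [first [assumption | solve [eauto with computable_db]] | ]
  | |- computable _ ?f => assumption
  end.

Ltac comp_basic := repeat comp_basic_step.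

Lemma computable_add Z : computable2 Z Nat.add.
Proof.
  eapply computable_ext;
    [| apply (computable_primrec2 Z (fun x => x) (fun _ _ y => S y)); comp_basic].
  intro w. simpl. generalize (unfst w) (unsnd w). intros x n. induction n; simpl; lia.
Qed.
#[local] Hint Resolve computable_add : computable_db.

Definition ifz (c a b : nat) : nat := match c with 0 => a | S _ => b end.

Lemma computable_ifz Z : computable3 Z ifz.
Proof.
  eapply computable_ext; [| unfold computable3;
    apply (computable_primrec Z (fun x => unfst x) (fun x _ _ => unsnd x)
             (fun w => pair (unsnd (unfst w)) (unsnd w)) (fun w => unfst (unfst w)));
    comp_basic].
  intro w. simpl. destruct (unfst (unfst w)); simpl;
    rewrite ?unfst_pair, ?unsnd_pair; reflexivity.
Qed.
#[local] Hint Resolve computable_ifz : computable_db.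

Lemma computable_pred Z : computable Z Nat.pred.
Proof.
  eapply computable_ext; [| apply (computable_primrec Z (fun _ => 0) (fun _ n _ => n)
                                      (fun _ => 0) (fun x => x)); comp_basic].
  intro n. destruct n; reflexivity.
Qed.
#[local] Hint Resolve computable_pred : computable_db.

Lemma computable_sub Z : computable2 Z Nat.sub.
Proof.
  eapply computable_ext;
    [| apply (computable_primrec2 Z (fun x => x) (fun _ _ y => Nat.pred y)); comp_basic].
  intro w. simpl. generalize (unfst w) (unsnd w). intros x n. induction n; simpl; lia.
Qed.
#[local] Hint Resolve computable_sub : computable_db.

Lemma computable_mul Z : computable2 Z Nat.mul.
Proof.
  eapply computable_ext;
    [| apply (computable_primrec2 Z (fun _ => 0) (fun x _ y => y + x)); comp_basic].
  intro w. simpl. generalize (unfst w) (unsnd w). intros x n. induction n; simpl; lia.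
Qed.
#[local] Hint Resolve computable_mul : computable_db.

Lemma computable_pow Z : computable2 Z Nat.pow.
Proof.
  eapply computable_ext;
    [| apply (computable_primrec2 Z (fun _ => 1) (fun x _ y => y * x)); comp_basic].
  intro w. simpl. generalize (unfst w) (unsnd w). intros x n.
  induction n; cbn [primrec]; [reflexivity|]. rewrite IHn. simpl. lia.
Qed.
#[local] Hint Resolve computable_pow : computable_db.

Lemma computable_andb Z a b :
  computable Z (fun x => Nat.b2n (a x)) -> computable Z (fun x => Nat.b2n (b x)) ->
  computable Z (fun x => Nat.b2n (a x && b x)).
Proof.
  intros. eapply computable_ext;
    [| apply (computable3_app Z ifz (fun x => Nat.b2n (a x)) (fun _ => 0)
                               (fun x => Nat.b2n (b x))); comp_basic; eauto].
  intro x. simpl. destruct (a x), (b x); reflexivity.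
Qed.

Lemma computable_negb Z a :
  computable Z (fun x => Nat.b2n (a x)) -> computable Z (fun x => Nat.b2n (negb (a x))).
Proof.
  intros. eapply computable_ext;
    [| apply (computable3_app Z ifz (fun x => Nat.b2n (a x)) (fun _ => 1) (fun _ => 0));
       comp_basic; eauto].
  intro x. simpl. destruct (a x); reflexivity.
Qed.

Lemma computable_implb Z a b :
  computable Z (fun x => Nat.b2n (a x)) -> computable Z (fun x => Nat.b2n (b x)) ->
  computable Z (fun x => Nat.b2n (implb (a x) (b x))).
Proof.
  intros. eapply computable_ext;
    [| apply (computable_negb Z (fun x => a x && negb (b x)));
       apply computable_andb; [|apply computable_negb]; auto].
  intro x. simpl. destruct (a x), (b x); reflexivity.
Qed.

Lemma computable_leb Z a b :
  computable Z a -> computable Z b -> computable Z (fun x => Nat.b2n (a x <=? b x)).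
Proof.
  intros. eapply computable_ext;
    [| apply (computable3_app Z ifz (fun x => a x - b x) (fun _ => 1) (fun _ => 0));
       comp_basic].
  intro x. simpl. destruct (a x <=? b x) eqn:E;
    [apply Nat.leb_le in E | apply Nat.leb_gt in E];
    destruct (a x - b x) eqn:F; simpl; try reflexivity; lia.
Qed.

Lemma computable_ltb Z a b :
  computable Z a -> computable Z b -> computable Z (fun x => Nat.b2n (a x <? b x)).
Proof.
  intros. eapply computable_ext;
    [| apply (computable_leb Z (fun x => S (a x)) b); comp_basic].
  intro x. reflexivity.
Qed.

Lemma computable_eqb Z a b :
  computable Z a -> computable Z b -> computable Z (fun x => Nat.b2n (a x =? b x)).
Proof.
  intros. eapply computable_ext;
    [| apply (computable_andb Z (fun x => a x <=? b x) (fun x => b x <=? a x));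
       apply computable_leb; auto].
  intro x. simpl. destruct (a x =? b x) eqn:E; [apply Nat.eqb_eq in E | apply Nat.eqb_neq in E].
  - rewrite E, Nat.leb_refl. reflexivity.
  - destruct (a x <=? b x) eqn:E1, (b x <=? a x) eqn:E2; try reflexivity.
    apply Nat.leb_le in E1, E2. lia.
Qed.

Fixpoint all_below (q : nat -> bool) (n : nat) : bool :=
  match n with 0 => true | S n => all_below q n && q n end.

Definition exists_below (q : nat -> bool) (n : nat) : bool :=
  negb (all_below (fun i => negb (q i)) n).

Fixpoint count_below (q : nat -> bool) (n : nat) : nat :=
  match n with 0 => 0 | S n => count_below q n + Nat.b2n (q n) end.

Lemma all_below_spec q n : all_below q n = true <-> forall i, i < n -> q i = true.
Proof.
  induction n; simpl.
  - split; auto; intros; lia.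
  - rewrite andb_true_iff, IHn. split.
    + intros [H1 H2] i Hi. destruct (Nat.eq_dec i n); [subst; auto | apply H1; lia].
    + intro H. split; auto.
Qed.

Lemma exists_below_spec q n : exists_below q n = true <-> exists i, i < n /\ q i = true.
Proof.
  unfold exists_below. rewrite negb_true_iff, <- not_true_iff_false, all_below_spec.
  split.
  - intro H. apply NNPP. intro Hn. apply H. intros i Hi.
    destruct (q i) eqn:Eq; auto. exfalso. eauto.
  - intros [i [Hi Hq]] H. specialize (H i Hi). rewrite Hq in H. discriminate.
Qed.

Lemma all_below_ext q q' n :
  (forall i, i < n -> q i = q' i) -> all_below q n = all_below q' n.
Proof.
  intro H. induction n; simpl; auto.
  rewrite IHn, H by (intros; try apply H; lia). reflexivity.
Qed.

Lemma exists_below_ext q q' n :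
  (forall i, i < n -> q i = q' i) -> exists_below q n = exists_below q' n.
Proof. intro H. unfold exists_below. f_equal. apply all_below_ext. intros. rewrite H; auto. Qed.

Lemma computable_all_below Z (E : nat -> nat -> bool) b :
  computable Z (fun w => Nat.b2n (E (unfst w) (unsnd w))) -> computable Z b ->
  computable Z (fun x => Nat.b2n (all_below (E x) (b x))).
Proof.
  intros HE Hb. eapply computable_ext;
    [| apply (computable_primrec Z (fun _ => 1) (fun x i y => ifz y 0 (Nat.b2n (E x i)))
                                 (fun x => x) b); comp_basic].
  - intro x. simpl. generalize (b x). intro n. induction n; simpl; [reflexivity|].
    rewrite IHn. destruct (all_below (E x) n); reflexivity.
  - apply (computable_comp Z (fun w => Nat.b2n (E (unfst w) (unsnd w))) (fun w => unfst w));
      comp_basic.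
Qed.

Lemma computable_exists_below Z (E : nat -> nat -> bool) b :
  computable Z (fun w => Nat.b2n (E (unfst w) (unsnd w))) -> computable Z b ->
  computable Z (fun x => Nat.b2n (exists_below (E x) (b x))).
Proof.
  intros HE Hb. unfold exists_below. apply computable_negb.
  apply (computable_all_below Z (fun x i => negb (E x i))); auto. apply computable_negb. auto.
Qed.

Lemma computable_count_below Z (E : nat -> nat -> bool) b :
  computable Z (fun w => Nat.b2n (E (unfst w) (unsnd w))) -> computable Z b ->
  computable Z (fun x => count_below (E x) (b x)).
Proof.
  intros HE Hb. eapply computable_ext;
    [| apply (computable_primrec Z (fun _ => 0) (fun x i y => y + Nat.b2n (E x i))
                                 (fun x => x) b); comp_basic].
  - intro x. simpl. generalize (b x). intro n.
    induction n; cbn [primrec count_below]; [reflexivity|]. rewrite IHn. reflexivity.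
  - apply (computable_comp Z (fun w => Nat.b2n (E (unfst w) (unsnd w))) (fun w => unfst w));
      comp_basic.
Qed.

Lemma computable_odd Z : computable Z (fun n => Nat.b2n (Nat.odd n)).
Proof.
  eapply computable_ext; [| apply (computable_primrec Z (fun _ => 0) (fun _ _ y => 1 - y)
                                      (fun _ => 0) (fun x => x)); comp_basic].
  intro n. induction n; cbn [primrec]; [reflexivity|].
  rewrite IHn, Nat.odd_succ, <- Nat.negb_odd. destruct (Nat.odd n); reflexivity.
Qed.
#[local] Hint Resolve computable_odd : computable_db.

Lemma div2_S n : Nat.div2 (S n) = Nat.div2 n + Nat.b2n (Nat.odd n).
Proof.
  induction n as [n IH] using (well_founded_induction lt_wf).
  destruct n as [|[|n]]; try reflexivity.
  change (Nat.div2 (S (S (S n)))) with (S (Nat.div2 (S n))).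
  change (Nat.div2 (S (S n))) with (S (Nat.div2 n)).
  rewrite (IH n ltac:(lia)), Nat.odd_succ_succ. lia.
Qed.

Lemma computable_div2 Z : computable Z Nat.div2.
Proof.
  eapply computable_ext;
    [| apply (computable_primrec Z (fun _ => 0) (fun _ n y => y + Nat.b2n (Nat.odd n))
                                 (fun _ => 0) (fun x => x)); comp_basic].
  - intro n. induction n; cbn [primrec]; [reflexivity|]. rewrite IHn, div2_S. reflexivity.
  - apply (computable_comp Z (fun n => Nat.b2n (Nat.odd n)) (fun w => unsnd (unfst w)));
      [apply computable_odd | comp_basic].
Qed.
#[local] Hint Resolve computable_div2 : computable_db.

Lemma testbit_primrec N i :
  Nat.testbit N i = Nat.odd (primrec (fun x => x) (fun _ _ y => Nat.div2 y) N i).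
Proof.
  assert (Hshift : forall N i, primrec (fun x => x) (fun _ _ y => Nat.div2 y) N (S i) =
                          primrec (fun x => x) (fun _ _ y => Nat.div2 y) (Nat.div2 N) i).
  { intros M j. induction j; [reflexivity|]. cbn [primrec] in *. rewrite IHj. reflexivity. }
  revert N. induction i; intro N; [reflexivity|].
  rewrite Hshift. simpl Nat.testbit. apply IHi.
Qed.

Lemma computable_testbit Z a b :
  computable Z a -> computable Z b -> computable Z (fun x => Nat.b2n (Nat.testbit (a x) (b x))).
Proof.
  intros Ha Hb. eapply computable_ext;
    [| apply (computable_comp Z (fun n => Nat.b2n (Nat.odd n))
               (fun x => primrec (fun x => x) (fun _ _ y => Nat.div2 y) (a x) (b x)));
       [apply computable_odd | comp_basic]].
  intro x. cbv beta. rewrite testbit_primrec. reflexivity.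
Qed.

Ltac comp_bool_step :=
  match goal with
  | |- computable _ (fun x => Nat.b2n (@?a x && @?b x)) => apply (computable_andb _ a b)
  | |- computable _ (fun x => Nat.b2n (implb (@?a x) (@?b x))) => apply (computable_implb _ a b)
  | |- computable _ (fun x => Nat.b2n (negb (@?a x))) => apply (computable_negb _ a)
  | |- computable _ (fun x => Nat.b2n (@?a x <=? @?b x)) => apply (computable_leb _ a b)
  | |- computable _ (fun x => Nat.b2n (@?a x <? @?b x)) => apply (computable_ltb _ a b)
  | |- computable _ (fun x => Nat.b2n (@?a x =? @?b x)) => apply (computable_eqb _ a b)
  | |- computable _ (fun x => Nat.b2n (Nat.testbit (@?a x) (@?b x))) =>
        apply (computable_testbit _ a b)
  | |- computable _ (fun x => Nat.b2n (all_below (fun i => @?E x i) (@?b x))) =>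
        apply (computable_all_below _ E b)
  | |- computable _ (fun x => Nat.b2n (exists_below (fun i => @?E x i) (@?b x))) =>
        apply (computable_exists_below _ E b)
  | |- computable _ (fun x => count_below (fun i => @?E x i) (@?b x)) =>
        apply (computable_count_below _ E b)
  end.

Ltac comp_auto := repeat (first [comp_bool_step | comp_basic_step]).

(** * Determinism and relativization of computations *)

Ltac pair_inj_all :=
  repeat match goal with
         | E : pair _ _ = pair _ _ |- _ => apply pair_inj in E; destruct E; subst
         end.

Lemma eval_rec_inv Z f g a n v : eval Z (cRec f g) (pair a n) v ->
  (n = 0 /\ eval Z f a v) \/
  (exists n' y, n = S n' /\ eval Z (cRec f g) (pair a n') y /\
                eval Z g (pair (pair a n') y) v).
Proof.
  intro H. inversion H; subst; pair_inj_all.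
  - left. auto.
  - right. eauto.
Qed.

Lemma eval_det Z c : forall x v w, eval Z c x v -> eval Z c x w -> v = w.
Proof.
  induction c; intros x v w H1 H2.
  1-6: inversion H1; inversion H2; subst; reflexivity.
  - inversion H1; inversion H2; subst. assert (y = y0) by eauto. subst. eauto.
  - inversion H1; inversion H2; subst. f_equal; eauto.
  - rewrite <- (pair_unpair x) in *.
    generalize dependent w. generalize dependent v. generalize (unsnd x). intro n.
    induction n; intros v Hv w Hw; apply eval_rec_inv in Hv, Hw.
    + destruct Hv as [[_ Hv]|[? [? [? _]]]]; [|lia].
      destruct Hw as [[_ Hw]|[? [? [? _]]]]; [|lia]. eauto.
    + destruct Hv as [[? _]|[n1 [y1 [E1 [Hv1 Hv2]]]]]; [lia|].
      destruct Hw as [[? _]|[n2 [y2 [E2 [Hw1 Hw2]]]]]; [lia|].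
      injection E1; injection E2; intros; subst. assert (y1 = y2) by eauto. subst. eauto.
  - inversion H1 as [| | | | | | | | | | f0 x0 y0 A1 A2];
      inversion H2 as [| | | | | | | | | | f1 x1 y1 B1 B2]; subst.
    destruct (Nat.lt_trichotomy v w) as [Hl|[He|Hl]]; auto.
    + destruct (B2 v Hl) as [u [Hu1 Hu2]]. exfalso. apply Hu1. eapply IHc; eauto.
    + destruct (A2 w Hl) as [u [Hu1 Hu2]]. exfalso. apply Hu1. eapply IHc; eauto.
Qed.

Fixpoint relativize (d c : code) : code :=
  match c with
  | cOracle => d
  | cComp f g => cComp (relativize d f) (relativize d g)
  | cPair f g => cPair (relativize d f) (relativize d g)
  | cRec f g => cRec (relativize d f) (relativize d g)
  | cMu f => cMu (relativize d f)
  | c => c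
  end.

Lemma relativize_spec (Z A : set) d :
  (forall n, eval Z d n (if A n then 1 else 0)) ->
  forall c x v, eval A c x v <-> eval Z (relativize d c) x v.
Proof.
  intros Hd c. induction c; intros x v; simpl; split; intro H.
  1-10: inversion H; subst; constructor.
  - inversion H; subst. apply Hd.
  - assert (v = if A x then 1 else 0) by (eapply eval_det; eauto). subst. constructor.
  - inversion H; subst. econstructor; [apply IHc2 | apply IHc1]; eauto.
  - inversion H; subst. econstructor; [apply IHc2 | apply IHc1]; eauto.
  - inversion H; subst. econstructor; [apply IHc1 | apply IHc2]; eauto.
  - inversion H; subst. econstructor; [apply IHc1 | apply IHc2]; eauto.
  - rewrite <- (pair_unpair x) in *. generalize dependent v. generalize (unsnd x). intro n.
    induction n; intros v Hv; apply eval_rec_inv in Hv.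
    + destruct Hv as [[_ Hv]|[? [? [? _]]]]; [|lia]. constructor. apply IHc1. auto.
    + destruct Hv as [[? _]|[n1 [y1 [E1 [Hv1 Hv2]]]]]; [lia|]. injection E1; intros; subst.
      econstructor; eauto. apply IHc2. auto.
  - rewrite <- (pair_unpair x) in *. generalize dependent v. generalize (unsnd x). intro n.
    induction n; intros v Hv; apply eval_rec_inv in Hv.
    + destruct Hv as [[_ Hv]|[? [? [? _]]]]; [|lia]. constructor. apply IHc1. auto.
    + destruct Hv as [[? _]|[n1 [y1 [E1 [Hv1 Hv2]]]]]; [lia|]. injection E1; intros; subst.
      econstructor; eauto. apply IHc2. auto.
  - inversion H as [| | | | | | | | | | f0 x0 y0 A1 A2]; subst.
    constructor; [apply IHc; auto|].
    intros m Hm. destruct (A2 m Hm) as [u [? ?]]. exists u. split; auto. apply IHc. auto.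
  - inversion H as [| | | | | | | | | | f0 x0 y0 A1 A2]; subst.
    constructor; [apply IHc; auto|].
    intros m Hm. destruct (A2 m Hm) as [u [? ?]]. exists u. split; auto. apply IHc. auto.
Qed.

(** * Step-bounded simulation *)

(* Stage-[t] approximation of an unbounded search for the least [y] with
   [H p y = 1] (value codes: 0 means "no value", [n+1] means value [n]):
   0 = all [m < t] gave values [>= 2], 1 = stuck on an undefined value,
   [S (S y)] = found [y]. *)
Definition mu_search (H : nat -> nat -> nat) (p t : nat) : nat :=
  primrec (fun _ => 0)
    (fun p t r => match r with
                  | 0 => match H p t with 0 => 1 | 1 => S (S t) | _ => 0 end
                  | _ => r
                  end) p t.

(* [run Z c x s] is [S v] if the computation of [c] on [x] converges to [v]
   when unbounded searches are cut off at [s], and 0 otherwise. *)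
Fixpoint run (Z : set) (c : code) (x s : nat) {struct c} : nat :=
  match c with
  | cZero => 1
  | cSucc => S (S x)
  | cId => S x
  | cFst => S (unfst x)
  | cSnd => S (unsnd x)
  | cOracle => S (if Z x then 1 else 0)
  | cComp f g => match run Z g x s with 0 => 0 | S y => run Z f y s end
  | cPair f g => match run Z f x s with
                 | 0 => 0
                 | S y => match run Z g x s with 0 => 0 | S z => S (pair y z) end
                 end
  | cRec f g =>
      primrec (fun p => run Z f (unfst p) (unsnd p))
        (fun p n r => match r with
                      | 0 => 0
                      | S y => run Z g (pair (pair (unfst p) n) y) (unsnd p)
                      end)
        (pair (unfst x) s) (unsnd x)
  | cMu f => match mu_search (fun p t => run Z f (pair (unfst p) t) (unsnd p)) (pair x s) s with
             | S (S y) => S y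
             | _ => 0
             end
  end.

Lemma mu_search_S H p t : mu_search H p (S t) =
  match mu_search H p t with
  | 0 => match H p t with 0 => 1 | 1 => S (S t) | _ => 0 end
  | r => r
  end.
Proof. unfold mu_search. cbn [primrec]. destruct (primrec _ _ p t); reflexivity. Qed.

Lemma mu_search_found_inv H p t y : mu_search H p t = S (S y) ->
  H p y = 1 /\ forall m, m < y -> H p m >= 2.
Proof.
  enough (Hinv : (mu_search H p t = 0 -> forall m, m < t -> H p m >= 2) /\
                 (forall y, mu_search H p t = S (S y) ->
                            H p y = 1 /\ forall m, m < y -> H p m >= 2))
    by apply Hinv.
  induction t; rewrite ?mu_search_S.
  - split; [intros _ m Hm; lia | intros y' Hy; discriminate].
  - destruct IHt as [I1 I2].
    destruct (mu_search H p t) as [|[|y']] eqn:E.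
    + specialize (I1 eq_refl). destruct (H p t) as [|[|w]] eqn:Eh.
      * split; intros; discriminate.
      * split; [intros; discriminate|]. intros y' Hy. injection Hy; intro; subst. auto.
      * split; [|intros; discriminate]. intros _ m Hm.
        destruct (Nat.eq_dec m t); [subst; lia | apply I1; lia].
    + split; intros; discriminate.
    + split; [intros; discriminate|]. intros y'' Hy. injection Hy; intro; subst. auto.
Qed.

Lemma mu_search_zero H p t : (forall m, m < t -> H p m >= 2) -> mu_search H p t = 0.
Proof.
  induction t; intro Hm; [reflexivity|]. rewrite mu_search_S.
  rewrite IHt by (intros; apply Hm; lia). specialize (Hm t ltac:(lia)).
  destruct (H p t) as [|[|w]]; lia || reflexivity.
Qed.

Lemma mu_search_found H p y t : H p y = 1 -> (forall m, m < y -> H p m >= 2) -> y < t ->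
  mu_search H p t = S (S y).
Proof.
  intros H1 H2. induction t; intro Ht; [lia|]. rewrite mu_search_S.
  destruct (Nat.eq_dec y t).
  - subst. rewrite (mu_search_zero H p t H2), H1. reflexivity.
  - rewrite IHt by lia. reflexivity.
Qed.

Lemma run_sound Z c : forall x s v, run Z c x s = S v -> eval Z c x v.
Proof.
  induction c; intros x s v Hb; simpl in Hb.
  1-6: injection Hb; intro; subst; constructor.
  - destruct (run Z c2 x s) eqn:E; [discriminate|]. econstructor; eauto.
  - destruct (run Z c1 x s) eqn:E; [discriminate|].
    destruct (run Z c2 x s) eqn:E2; [discriminate|].
    injection Hb; intro; subst. econstructor; eauto.
  - rewrite <- (pair_unpair x). revert v Hb. generalize (unsnd x). intro n.
    induction n; intros v Hb; cbn [primrec] in Hb.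
    + rewrite unfst_pair, unsnd_pair in Hb. constructor. eauto.
    + destruct (primrec _ _ _ n) eqn:E; [discriminate|]. rewrite unfst_pair, unsnd_pair in Hb.
      econstructor; eauto.
  - destruct (mu_search _ _ s) as [|[|y]] eqn:E; try discriminate.
    injection Hb; intro; subst.
    destruct (mu_search_found_inv _ _ _ _ E) as [H1 H2].
    rewrite unfst_pair, unsnd_pair in H1. constructor; [eauto|].
    intros m Hm. specialize (H2 m Hm). rewrite unfst_pair, unsnd_pair in H2.
    destruct (run Z c (pair x m) s) as [|w] eqn:Ew; [lia|]. exists w. split; [lia | eauto].
Qed.

Lemma common_bound (P : nat -> nat -> Prop) y :
  (forall m, m < y -> exists s0, forall s, s0 <= s -> P m s) ->
  exists s0, forall m s, m < y -> s0 <= s -> P m s.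
Proof.
  induction y; intro H; [exists 0; intros; lia|].
  destruct IHy as [s1 Hs1]; [intros; apply H; lia|].
  destruct (H y ltac:(lia)) as [s2 Hs2]. exists (max s1 s2). intros m s Hm Hs.
  destruct (Nat.eq_dec m y); [subst; apply Hs2; lia | apply Hs1; lia].
Qed.

Lemma run_complete Z c : forall x v, eval Z c x v ->
  exists s0, forall s, s0 <= s -> run Z c x s = S v.
Proof.
  induction c; intros x v Hv.
  1-6: inversion Hv; subst; exists 0; intros; reflexivity.
  - inversion Hv; subst.
    destruct (IHc2 _ _ H1) as [s1 H1']. destruct (IHc1 _ _ H4) as [s2 H2'].
    exists (max s1 s2). intros s Hs. simpl. rewrite H1' by lia. apply H2'. lia.
  - inversion Hv; subst.
    destruct (IHc1 _ _ H1) as [s1 H1']. destruct (IHc2 _ _ H4) as [s2 H2'].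
    exists (max s1 s2). intros s Hs. simpl. rewrite H1', H2' by lia. reflexivity.
  - rewrite <- (pair_unpair x) in Hv |- *. revert v Hv.
    generalize (unsnd x) (unfst x). intros n a.
    induction n; intros v Hv; apply eval_rec_inv in Hv.
    + destruct Hv as [[_ Hv]|[? [? [? _]]]]; [|lia]. destruct (IHc1 _ _ Hv) as [s1 Hs1].
      exists s1. intros s Hs. simpl. rewrite unsnd_pair, unfst_pair. cbn [primrec].
      rewrite unfst_pair, unsnd_pair. auto.
    + destruct Hv as [[? _]|[n1 [y1 [E1 [Hv1 Hv2]]]]]; [lia|]. injection E1; intros; subst.
      destruct (IHn _ Hv1) as [s1 Hs1]. destruct (IHc2 _ _ Hv2) as [s2 Hs2].
      exists (max s1 s2). intros s Hs. specialize (Hs1 s ltac:(lia)). simpl in Hs1 |- *.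
      rewrite unsnd_pair, unfst_pair in *. cbn [primrec]. rewrite Hs1, unfst_pair, unsnd_pair.
      apply Hs2. lia.
  - inversion Hv as [| | | | | | | | | | f0 x0 y0 A1 A2]; subst.
    destruct (IHc _ _ A1) as [s1 Hs1].
    destruct (common_bound (fun m s => exists u, u <> 0 /\ run Z c (pair x m) s = S u) v)
      as [s2 Hs2].
    { intros m Hm. destruct (A2 m Hm) as [u [Hu1 Hu2]]. destruct (IHc _ _ Hu2) as [s3 Hs3].
      exists s3. intros s Hs. exists u. auto. }
    exists (max (S v) (max s1 s2)). intros s Hs. simpl.
    rewrite (mu_search_found _ _ v); [reflexivity | | | lia].
    + rewrite unfst_pair, unsnd_pair. apply Hs1. lia.
    + intros m Hm. rewrite unfst_pair, unsnd_pair.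
      destruct (Hs2 m s Hm ltac:(lia)) as [u [? E]]. rewrite E. lia.
Qed.

Lemma computable_run Z c : computable2 Z (run Z c).
Proof.
  induction c; unfold computable2; simpl.
  1-6: comp_auto.
  - eapply computable_ext;
      [| apply (computable3_app Z ifz (fun w => run Z c2 (unfst w) (unsnd w)) (fun _ => 0)
                 (fun w => run Z c1 (Nat.pred (run Z c2 (unfst w) (unsnd w))) (unsnd w)));
         comp_auto].
    intro w. simpl. destruct (run Z c2 (unfst w) (unsnd w)); reflexivity.
  - eapply computable_ext;
      [| apply (computable3_app Z ifz (fun w => run Z c1 (unfst w) (unsnd w)) (fun _ => 0)
                 (fun w => ifz (run Z c2 (unfst w) (unsnd w)) 0
                             (S (pair (Nat.pred (run Z c1 (unfst w) (unsnd w)))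
                                      (Nat.pred (run Z c2 (unfst w) (unsnd w)))))));
         comp_auto].
    intro w. simpl. destruct (run Z c1 (unfst w) (unsnd w)); simpl; [reflexivity|].
    destruct (run Z c2 (unfst w) (unsnd w)); reflexivity.
  - eapply computable_ext;
      [| apply (computable_primrec Z (fun p => run Z c1 (unfst p) (unsnd p))
                 (fun p n r => ifz r 0 (run Z c2 (pair (pair (unfst p) n) (Nat.pred r)) (unsnd p)))
                 (fun w => pair (unfst (unfst w)) (unsnd w)) (fun w => unsnd (unfst w)));
         comp_auto].
    intro w. apply primrec_ext. intros a b r. destruct r; reflexivity.
  - eapply computable_ext;
      [| apply (computable_comp Z Nat.pred (fun w => primrec (fun _ => 0) (fun p t r =>
                 ifz r (ifz (run Z c (pair (unfst p) t) (unsnd p)) 1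
                            (ifz (Nat.pred (run Z c (pair (unfst p) t) (unsnd p))) (S (S t)) 0)) r)
                 (pair (unfst w) (unsnd w)) (unsnd w))); [apply computable_pred | comp_auto]].
    intro w. unfold mu_search.
    rewrite (primrec_ext _ _ (fun p t r => match r with
      | 0 => match run Z c (pair (unfst p) t) (unsnd p) with 0 => 1 | 1 => S (S t) | _ => 0 end
      | _ => r end)).
    + destruct (primrec _ _ _ _) as [|[|]]; reflexivity.
    + intros a b r. destruct r; [|reflexivity]. simpl.
      destruct (run Z c _ _) as [|[|]]; reflexivity.
Qed.

(* [bit_length N] is the position of the leading bit of [N > 0]. *)
Definition bit_length (N : nat) : nat := count_below (fun i => 2 ^ (S i) <=? N) N.

Lemma computable_bit_length Z : computable Z bit_length.
Proof. unfold bit_length. comp_auto. Qed.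
#[local] Hint Resolve computable_bit_length : computable_db.

Lemma count_below_prefix q n L :
  (forall i, i < n -> q i = (i <? L)) -> L <= n -> count_below q n = L.
Proof.
  intros H HL. enough (forall m, m <= n -> count_below q m = min m L) by (rewrite H0; lia).
  induction m; intro Hm; cbn [count_below]; [reflexivity|].
  rewrite IHm, H by lia.
  destruct (m <? L) eqn:E; [apply Nat.ltb_lt in E | apply Nat.ltb_ge in E]; cbn [Nat.b2n]; lia.
Qed.

Lemma bit_length_spec N L : 2 ^ L <= N -> N < 2 ^ (S L) -> bit_length N = L.
Proof.
  intros H1 H2. unfold bit_length. apply count_below_prefix.
  - intros i Hi. destruct (S i <=? L) eqn:E.
    + apply Nat.leb_le in E. rewrite (proj2 (Nat.ltb_lt i L)) by lia.
      apply Nat.leb_le. eapply Nat.le_trans; [|exact H1]. apply Nat.pow_le_mono_r; lia.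
    + apply Nat.leb_gt in E. rewrite (proj2 (Nat.ltb_ge i L)) by lia.
      apply Nat.leb_gt. eapply Nat.lt_le_trans; [exact H2|]. apply Nat.pow_le_mono_r; lia.
  - pose proof (Nat.pow_gt_lin_r 2 L ltac:(lia)). lia.
Qed.

(* [strcode s + 1] is the number whose binary digits, below a leading 1,
   are the bits of [s] (least significant first). *)
Lemma strcode_cons b s : strcode (b :: s) + 1 = 2 * (strcode s + 1) + Nat.b2n b.
Proof. simpl. destruct b; simpl; lia. Qed.

Lemma strcode_bounds s : 2 ^ length s <= strcode s + 1 < 2 ^ (S (length s)).
Proof.
  induction s as [|b s IH]; [simpl; lia|]. rewrite strcode_cons. simpl length.
  rewrite !Nat.pow_succ_r'. rewrite Nat.pow_succ_r' in IH. destruct b; simpl Nat.b2n; lia.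
Qed.

Lemma strcode_bits s i : i < length s -> Nat.testbit (strcode s + 1) i = nth i s false.
Proof.
  revert i. induction s as [|b s IH]; intros i Hi; [simpl in Hi; lia|].
  rewrite strcode_cons. destruct i.
  - destruct b; simpl Nat.b2n.
    + rewrite Nat.testbit_odd_0. auto.
    + rewrite Nat.add_0_r, Nat.testbit_even_0. auto.
  - simpl nth. simpl in Hi. destruct b; simpl Nat.b2n.
    + rewrite Nat.testbit_odd_succ by lia. apply IH; lia.
    + rewrite Nat.add_0_r, Nat.testbit_even_succ by lia. apply IH; lia.
Qed.

Lemma strcode_ge_length s : length s <= strcode s.
Proof.
  destruct (strcode_bounds s). pose proof (Nat.pow_gt_lin_r 2 (length s) ltac:(lia)). lia.
Qed.

Lemma prefix_nth P n i : i < n -> nth i (prefix_of P n) false = P i.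
Proof.
  intro H. unfold prefix_of. rewrite nth_indep with (d' := P 0).
  - rewrite map_nth, seq_nth; auto.
  - rewrite length_map, length_seq; auto.
Qed.

Lemma prefix_length P n : length (prefix_of P n) = n.
Proof. unfold prefix_of. rewrite length_map, length_seq. auto. Qed.

Lemma testbit_le m i : Nat.testbit m i = true -> i <= m.
Proof.
  intro H. destruct (le_lt_dec i m) as [?|Hl]; auto.
  rewrite Nat.bits_above_log2 in H; [discriminate|].
  pose proof (Nat.log2_le_lin m ltac:(lia)). lia.
Qed.

(** * The tree of covers avoiding finitely many c.e. upward-closed classes *)

Definition contains_member (W : nat -> Prop) (Y : set) : Prop :=
  exists m, W m /\ forall i, Nat.testbit m i = true -> Y i = true.

Lemma divmod_block k t j : j < k -> (k * t + j) / k = t /\ (k * t + j) mod k = j.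
Proof.
  intro H. split; symmetry;
    [apply (Nat.div_unique _ _ _ j) | apply (Nat.mod_unique _ _ t)]; auto.
Qed.

Section CoverTree.

(* A set [P] encodes the [k] sets [n |-> P (k * n + j)], [j < k].  The
   [j]-th class to be avoided is enumerated by the stage function [G j]:
   [G j m u >= 1] means that [m] has been listed by stage [u]. *)
Variable k : nat.
Variable G : nat -> nat -> nat -> nat.

(* The first [L] bits of [b] are consistent with: (i) every complete block
   of [k] bits contains a 1 (covering), (ii) no finite set [m < L] listed by
   stage [L] in the [j]-th enumeration is visibly contained in the [j]-th
   encoded set. *)
Definition good_prefix (b : nat -> bool) (L : nat) : bool :=
  all_below (fun t => implb (k * t + k <=? L) (exists_below (fun j => b (k * t + j)) k)) L &&
  all_below (fun j => all_below (fun m =>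
      implb (exists_below (fun u => 1 <=? G j m u) (S L))
            (negb (all_below (fun i => implb (Nat.testbit m i)
                                             ((k * i + j <? L) && b (k * i + j))) (S m)))) L) k.

(* The tree, with binary strings coded by [strcode]: bit [i] of a string
   [s] is bit [i] of [S (strcode s)], whose length is [bit_length]. *)
Definition cover_tree : set :=
  fun n => good_prefix (Nat.testbit (S n)) (bit_length (S n)).

Lemma computable_cover_tree Z :
  computable3 Z G -> computable Z (fun n => Nat.b2n (cover_tree n)).
Proof. intro HG. unfold cover_tree, good_prefix. comp_auto. Qed.

Lemma good_prefix_ext b b' L :
  (forall i, i < L -> b i = b' i) -> good_prefix b L = good_prefix b' L.
Proof.
  intro H. unfold good_prefix. f_equal.
  - apply all_below_ext. intros t Ht.
    destruct (k * t + k <=? L) eqn:E; simpl; auto. apply Nat.leb_le in E.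
    apply exists_below_ext. intros j Hj. apply H. lia.
  - apply all_below_ext. intros j Hj. apply all_below_ext. intros m Hm.
    do 2 f_equal. apply all_below_ext. intros i Hi. f_equal.
    destruct (k * i + j <? L) eqn:E; simpl; auto. apply Nat.ltb_lt in E. apply H; auto.
Qed.

Lemma good_prefix_mono b L L' :
  good_prefix b L = true -> L' <= L -> good_prefix b L' = true.
Proof.
  unfold good_prefix. rewrite !andb_true_iff, !all_below_spec. intros [HA HB] HL. split.
  - intros t Ht. specialize (HA t ltac:(lia)). destruct (k * t + k <=? L') eqn:E; auto.
    apply Nat.leb_le in E. rewrite (proj2 (Nat.leb_le (k * t + k) L)) in HA by lia. exact HA.
  - intros j Hj. rewrite all_below_spec. intros m Hm.
    specialize (HB j Hj). rewrite all_below_spec in HB. specialize (HB m ltac:(lia)).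
    destruct (exists_below _ (S L')) eqn:E1; auto. cbn [implb].
    rewrite exists_below_spec in E1. destruct E1 as [u [Hu Gu]].
    rewrite (proj2 (exists_below_spec (fun u => 1 <=? G j m u) (S L))) in HB
      by (exists u; split; auto; lia).
    cbn [implb] in HB. rewrite negb_true_iff, <- not_true_iff_false, all_below_spec in HB |- *.
    intros C. apply HB. intros i Hi. specialize (C i Hi).
    destruct (Nat.testbit m i); auto. cbn [implb] in C |- *.
    rewrite andb_true_iff, Nat.ltb_lt in *. destruct C. split; auto. lia.
Qed.

Lemma in_cover_tree_iff s :
  in_tree cover_tree s <-> good_prefix (fun i => nth i s false) (length s) = true.
Proof.
  unfold in_tree, cover_tree. replace (S (strcode s)) with (strcode s + 1) by lia.
  destruct (strcode_bounds s). rewrite (bit_length_spec _ (length s)) by auto.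
  rewrite (good_prefix_ext _ (fun i => nth i s false)); [reflexivity|]. apply strcode_bits.
Qed.

Lemma in_cover_tree_prefix P n :
  in_tree cover_tree (prefix_of P n) <-> good_prefix P n = true.
Proof.
  rewrite in_cover_tree_iff, prefix_length, (good_prefix_ext _ P); [reflexivity|].
  intros. apply prefix_nth; auto.
Qed.

Lemma cover_tree_is_tree : is_tree cover_tree.
Proof.
  intros s t Hst. rewrite in_cover_tree_iff in *. rewrite length_app in Hst.
  apply (good_prefix_mono _ _ (length s)) in Hst; [|lia].
  rewrite (good_prefix_ext _ (fun i => nth i s false)) in Hst; auto.
  intros i Hi. apply app_nth1; auto.
Qed.

Variable Wj : nat -> nat -> Prop.
Hypothesis stage_sound : forall j m u, j < k -> 1 <= G j m u -> Wj j m.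
Hypothesis stage_complete : forall j m, j < k -> Wj j m -> exists u, 1 <= G j m u.

Lemma avoiding_cover_good (Ys : nat -> set) :
  (forall n, exists j, j < k /\ Ys j n = true) ->
  (forall j, j < k -> ~ contains_member (Wj j) (Ys j)) ->
  forall n, good_prefix (fun x => Ys (x mod k) (x / k)) n = true.
Proof.
  intros Hcov HD n. unfold good_prefix. rewrite andb_true_iff, !all_below_spec. split.
  - intros t Ht. destruct (k * t + k <=? n); auto. cbn [implb].
    apply exists_below_spec. destruct (Hcov t) as [j [Hj Hy]]. exists j. split; auto.
    destruct (divmod_block k t j Hj) as [E1 E2]. rewrite E1, E2. auto.
  - intros j Hj. rewrite all_below_spec. intros m Hm.
    destruct (exists_below _ (S n)) eqn:E; auto. cbn [implb].
    apply exists_below_spec in E. destruct E as [u [_ Hu]]. apply Nat.leb_le in Hu.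
    rewrite negb_true_iff, <- not_true_iff_false, all_below_spec. intro C.
    apply (HD j Hj). exists m. split; [apply (stage_sound j m u); auto|].
    intros i Hi. specialize (C i ltac:(pose proof (testbit_le _ _ Hi); lia)).
    rewrite Hi in C. cbn [implb] in C. apply andb_true_iff in C. destruct C as [_ C].
    destruct (divmod_block k i j Hj) as [E1 E2]. rewrite E1, E2 in C. auto.
Qed.

Lemma cover_tree_infinite (Ys : nat -> set) :
  (forall n, exists j, j < k /\ Ys j n = true) ->
  (forall j, j < k -> ~ contains_member (Wj j) (Ys j)) ->
  infinite cover_tree.
Proof.
  intros Hcov HD n. set (P0 := fun x => Ys (x mod k) (x / k)).
  exists (strcode (prefix_of P0 n)). split.
  - pose proof (strcode_ge_length (prefix_of P0 n)). rewrite prefix_length in H. lia.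
  - apply in_cover_tree_prefix, avoiding_cover_good; auto.
Qed.

Lemma path_avoiding_cover (P : set) : 1 <= k -> is_path P cover_tree ->
  (forall n, exists j, j < k /\ P (k * n + j) = true) /\
  (forall j, j < k -> ~ contains_member (Wj j) (fun n => P (k * n + j))).
Proof.
  intros Hk HP. split.
  - intro n. specialize (HP (k * n + k)). apply (proj1 (in_cover_tree_prefix _ _)) in HP.
    unfold good_prefix in HP. rewrite andb_true_iff, all_below_spec in HP.
    destruct HP as [HA _]. specialize (HA n ltac:(nia)).
    rewrite (proj2 (Nat.leb_le (k * n + k) (k * n + k))) in HA by lia. cbn [implb] in HA.
    apply exists_below_spec in HA. destruct HA as [j [? ?]]. eauto.
  - intros j Hj [m [Wm Hm]]. destruct (stage_complete j m Hj Wm) as [u Hu].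
    set (L := u + m + 1 + k * m + k).
    specialize (HP L). apply (proj1 (in_cover_tree_prefix _ _)) in HP. unfold good_prefix in HP.
    rewrite andb_true_iff, !all_below_spec in HP. destruct HP as [_ HB].
    specialize (HB j Hj). rewrite all_below_spec in HB. specialize (HB m ltac:(unfold L; lia)).
    rewrite (proj2 (exists_below_spec (fun u => 1 <=? G j m u) (S L))) in HB
      by (exists u; split; [unfold L; lia | apply Nat.leb_le; auto]).
    cbn [implb] in HB. rewrite negb_true_iff, <- not_true_iff_false, all_below_spec in HB.
    apply HB. intros i Hi. destruct (Nat.testbit m i) eqn:Ti; auto. cbn [implb].
    apply andb_true_iff. split; [apply Nat.ltb_lt; unfold L; nia | apply Hm; auto].
Qed.

End CoverTree.

(** * Effective facts about countable Scott sets *)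

Lemma join_even (X Y : set) n : join X Y (2 * n) = X n.
Proof. unfold join. rewrite Nat.even_even, Nat.div2_double. auto. Qed.

Lemma join_odd (X Y : set) n : join X Y (2 * n + 1) = Y n.
Proof. unfold join. rewrite Nat.even_odd, Nat.div2_odd'. auto. Qed.

Lemma common_oracle M (Xs : nat -> set) k : scott_coded M ->
  (forall j, j < k -> inM M (Xs j)) ->
  exists Z, inM M Z /\ exists d : nat -> code,
    forall j, j < k -> forall n, eval Z (d j) n (if Xs j n then 1 else 0).
Proof.
  intros [_ [Hjoin _]]. induction k; intro HX.
  - exists (col M 0). split; [exists 0; auto|]. exists (fun _ => cZero). intros; lia.
  - destruct IHk as [Z [HZ [d Hd]]]; [intros; apply HX; lia|].
    exists (join Z (Xs k)). split; [apply Hjoin; auto|].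
    destruct (computable_ext (join Z (Xs k)) (fun n => if join Z (Xs k) (2 * n) then 1 else 0)
                (fun n => if Z n then 1 else 0)) as [d0 Hd0];
      [intro n; rewrite join_even; auto | comp_auto |].
    destruct (computable_ext (join Z (Xs k)) (fun n => if join Z (Xs k) (2 * n + 1) then 1 else 0)
                (fun n => if Xs k n then 1 else 0)) as [d1 Hd1];
      [intro n; rewrite join_odd; auto | comp_auto |].
    exists (fun j => if j <? k then relativize d0 (d j) else d1). intros j Hj n.
    destruct (j <? k) eqn:E.
    + apply Nat.ltb_lt in E. apply (relativize_spec _ Z); auto.
    + apply Nat.ltb_ge in E. replace j with k by lia. auto.
Qed.

Lemma scott_computable M Z (Y : set) : scott_coded M -> inM M Z ->
  computable Z (fun n => if Y n then 1 else 0) -> inM M Y.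
Proof. intros [Hred _] HZ HY. apply (Hred Y Z HZ HY). Qed.

Lemma U_relativized (Z X : set) d e Y :
  (forall n, eval Z d n (if X n then 1 else 0)) ->
  U X e Y <-> contains_member (fun m => exists v, eval Z (relativize d (decode e)) m v) Y.
Proof.
  intro Hd. unfold U, W, canon, contains_member.
  split; intros [m [[v Hv] Hm]]; exists m; split; auto; exists v; apply (relativize_spec Z X d); auto.
Qed.

Fixpoint stage_select Z (cs : nat -> code) (k : nat) : nat -> nat -> nat -> nat :=
  match k with
  | 0 => fun _ _ _ => 0
  | S k => fun j m u => ifz (Nat.b2n (j =? k)) (stage_select Z cs k j m u) (run Z (cs k) m u)
  end.

Lemma stage_select_spec Z cs k j m u : j < k -> stage_select Z cs k j m u = run Z (cs j) m u.
Proof.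
  induction k; intro H; [lia|]. simpl. destruct (j =? k) eqn:E; simpl.
  - apply Nat.eqb_eq in E. subst. auto.
  - apply Nat.eqb_neq in E. apply IHk. lia.
Qed.

Lemma computable_stage_select Z cs k : computable3 Z (stage_select Z cs k).
Proof.
  induction k; simpl; [comp_auto|].
  pose proof (computable_run Z (cs k)). unfold computable3, computable2 in *. comp_auto.
Qed.

Lemma scott_avoiding_cover M k (Xs : nat -> set) (es : nat -> nat) (Ys : nat -> set) :
  scott_coded M -> (forall j, j < k -> inM M (Xs j)) ->
  (forall n, exists j, j < k /\ Ys j n = true) ->
  (forall j, j < k -> ~ U (Xs j) (es j) (Ys j)) ->
  exists Ps : nat -> set,
    (forall n, exists j, j < k /\ Ps j n = true) /\
    (forall j, j < k -> inM M (Ps j) /\ ~ U (Xs j) (es j) (Ps j)).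
Proof.
  intros HS HX Hcov Havoid.
  assert (Hk : 1 <= k) by (destruct (Hcov 0) as [j [? _]]; lia).
  destruct (common_oracle M Xs k HS HX) as [Z [HZ [d Hd]]].
  set (cs := fun j => relativize (d j) (decode (es j))).
  set (G := stage_select Z cs k).
  set (Wj := fun j m => exists v, eval Z (cs j) m v).
  assert (HU : forall j Y, j < k -> (U (Xs j) (es j) Y <-> contains_member (Wj j) Y))
    by (intros j Y Hj; apply U_relativized, Hd; auto).
  assert (Hsound : forall j m u, j < k -> 1 <= G j m u -> Wj j m).
  { intros j m u Hj HG. unfold G in HG. rewrite stage_select_spec in HG by auto.
    destruct (run Z (cs j) m u) eqn:E; [lia|]. exists n. eapply run_sound; eauto. }
  assert (Hcomplete : forall j m, j < k -> Wj j m -> exists u, 1 <= G j m u).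
  { intros j m Hj [v Hv]. destruct (run_complete _ _ _ _ Hv) as [s0 Hs0]. exists s0.
    unfold G. rewrite stage_select_spec, Hs0 by auto. lia. }
  assert (HT : inM M (cover_tree k G)).
  { apply (scott_computable M Z); auto. apply computable_cover_tree, computable_stage_select. }
  destruct (proj2 (proj2 HS) _ HT (cover_tree_is_tree k G)
              (cover_tree_infinite k G Wj Hsound Ys Hcov
                 (fun j Hj HD => Havoid j Hj (proj2 (HU j _ Hj) HD))))
    as [P [HP Hpath]].
  destruct (path_avoiding_cover k G Wj Hcomplete P Hk Hpath) as [HPcov HPavoid].
  exists (fun j n => P (k * n + j)). split; auto. intros j Hj. split.
  - apply (scott_computable M P); auto. comp_auto.
  - rewrite HU by auto. auto.
Qed.

Lemma U_upward X e Y Y' : U X e Y -> subset Y Y' -> U X e Y'.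
Proof. intros [m [Hm1 Hm2]] Hs. exists m. split; auto. Qed.

Lemma UC_upward M C Y Y' : UC M C Y -> subset Y Y' -> UC M C Y'.
Proof. intros H Hs e i Hc. eapply U_upward; eauto. Qed.

Lemma largeness_super (A B : cls) : largeness A -> cls_sub A B ->
  (forall X Y, B X -> subset X Y -> B Y) -> largeness B.
Proof.
  intros [[Y0 HY0] [_ Hcov]] Hsub Hup. split; [|split]; auto.
  - exists Y0. auto.
  - intros k Ys Hk. destruct (Hcov k Ys Hk) as [j [Hj HA]]. eauto.
Qed.

(* If [A] is M-cohesive and [A n B] is large, then [B] contains every member
   of [M] lying in [A]: such a [Y] has [A <= L Y], so of the cover
   [{Y, ~Y}] only [Y] can be in [A n B]. *)
Lemma cohesive_member_in M (A B : cls) Y :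
  M_cohesive M A -> inM M Y -> A Y -> largeness (cls_inter A B) -> B Y.
Proof.
  intros Hco HY HAY [_ [_ Hcov]].
  assert (Hinf : forall Z, L Z (compl Z) -> False).
  { intros Z H. destruct (H 0) as [m [_ Hm]]. unfold compl in Hm. destruct (Z m); discriminate. }
  destruct (Hco Y HY) as [HL|HL].
  - destruct (Hcov 2 (fun j => if j =? 0 then Y else compl Y)) as [j [Hj [HA HB]]].
    { intro n. destruct (Y n) eqn:E; [exists 0 | exists 1]; split; auto.
      simpl. unfold compl. rewrite E. auto. }
    destruct j as [|[|]]; simpl in *; [auto | exfalso; exact (Hinf Y (HL _ HA)) | lia].
  - exfalso. apply (Hinf (compl Y)). unfold L, compl in *.
    intro n. destruct (HL Y HAY n) as [m [Hm HY']]. exists m. split; auto.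
    destruct (Y m); auto.
Qed.

Lemma finite_choice (P : nat -> nat -> set -> Prop) k :
  (forall j, j < k -> exists e X, P j e X) ->
  exists (es : nat -> nat) (Xs : nat -> set), forall j, j < k -> P j (es j) (Xs j).
Proof.
  induction k; intro H; [exists (fun _ => 0), (fun _ _ => false); intros; lia|].
  destruct IHk as [es [Xs Hf]]; [intros; apply H; lia|].
  destruct (H k ltac:(lia)) as [e [X HX]].
  exists (fun j => if j =? k then e else es j), (fun j => if j =? k then X else Xs j).
  intros j Hj. destruct (j =? k) eqn:E.
  - apply Nat.eqb_eq in E; subst; auto.
  - apply Nat.eqb_neq in E. apply Hf. lia.
Qed.

(** * The class <U^M_C> *)

Lemma gen_upward M C Y Y' : gen M C Y -> subset Y Y' -> gen M C Y'.
Proof. intros HY Hs e X HX Hl. eapply U_upward; eauto. Qed.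

(* Each class [U^{X_i}_e] with [(e, i)] in [C] meets [U^M_C] in all of
   [U^M_C], so it is one of the classes intersected in <U^M_C>. *)
Lemma gen_sub_UC M C : largeness (UC M C) -> cls_sub (gen M C) (UC M C).
Proof.
  intros HL Y HY e i Hc. apply (HY e (col M i)); [exists i; auto|].
  apply (largeness_super (UC M C)); auto.
  - intros Z HZ. split; auto.
  - intros A B [HA1 HA2] Hs. split; [eapply UC_upward | eapply U_upward]; eauto.
Qed.

Lemma gen_partition_regular M C : scott_coded M -> largeness (UC M C) ->
  M_cohesive M (UC M C) ->
  forall (k : nat) (Ys : nat -> set), (forall n, exists j, j < k /\ Ys j n = true) ->
  exists j, j < k /\ gen M C (Ys j).
Proof.
  intros HS HL Hco k Ys Hk. apply NNPP. intro Hnone.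
  assert (Hbad : forall j, j < k -> exists e X,
             inM M X /\ largeness (cls_inter (UC M C) (U X e)) /\ ~ U X e (Ys j)).
  { intros j Hj. apply NNPP. intro Hc. apply Hnone. exists j. split; auto.
    intros e X HX HlX. apply NNPP. intro HU. apply Hc. exists e, X. auto. }
  destruct (finite_choice _ k Hbad) as [es [Xs Hf]].
  destruct (scott_avoiding_cover M k Xs es Ys HS) as [Ps [HPcov HPs]];
    [intros j Hj; apply Hf; auto | auto | intros j Hj; apply Hf; auto |].
  destruct (proj2 (proj2 HL) k Ps HPcov) as [j [Hj HUC]].
  destruct (HPs j Hj) as [HPM HPavoid]. destruct (Hf j Hj) as [_ [HLj _]].
  apply HPavoid. apply (cohesive_member_in M (UC M C)); auto.
Qed.

Theorem lemma2p11 (M : set) (C : nat -> nat -> Prop) :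
  scott_coded M ->
  largeness (UC M C) ->
  M_cohesive M (UC M C) ->
  largeness (gen M C) /\ M_minimal M (gen M C) /\ cls_sub (gen M C) (UC M C).
Proof.
  intros HS HL Hco. pose proof (gen_sub_UC M C HL) as Hsub.
  split; [|split; auto].
  - split; [|split].
    + exists (fun _ => true). intros e X HX [[Y0 [_ HY0]] _].
      eapply U_upward; eauto. intros n _. auto.
    + apply gen_upward.
    + apply gen_partition_regular; auto.
  - intros X e HX. destruct (classic (largeness (cls_inter (gen M C) (U X e)))) as [Hl|Hl];
      [left | right; auto].
    intros Y HY. apply HY; auto. apply (largeness_super _ _ Hl).
    + intros Z [HZ1 HZ2]. split; auto.
    + intros A B [HA1 HA2] Hs. split; [eapply UC_upward | eapply U_upward]; eauto.
Qed.
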